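(* Let $n\ge1$ and let $\alpha$ be a composition with $\bm{l}(\alpha)\le n$. Write $M_\alpha=\sum_\gamma\tilde K_{\alpha,\gamma}\,\mathcal{S}_\gamma$ in $\mathit{QSym}_n$, the sum over compositions $\gamma$ with $\bm{l}(\gamma)\le n$ (the $\mathcal{S}_\gamma$ with $\bm{l}(\gamma)\le n$ form a basis of $\mathit{QSym}_n$). Then $\tilde K_{\alpha,\alpha}=1$, and $\tilde K_{\alpha,\gamma}=0$ whenever $\alpha\prec\gamma$.
   Context: Let $\mathbf{x}=\{x_1,\dots,x_n\}$. A composition is a finite sequence $\alpha=(\alpha_1,\dots,\alpha_k)$ of positive integers with length $\bm{l}(\alpha)=k$. $\mathit{QSym}_n$ is the ring of quasisymmetric polynomials in $\mathbf{x}$ over $\mathbb{Q}$: those $f$ such that for every composition $(\alpha_1,\dots,\alpha_k)$ with $k\le n$ the coefficient of $x_1^{\alpha_1}\cdots x_k^{\alpha_k}$ equals that of $x_{i_1}^{\alpha_1}\cdots x_{i_k}^{\alpha_k}$ for all $i_1<\dots<i_k$. $M_\alpha=\sum_{1\le i_1<\dots<i_k\le n}x_{i_1}^{\alpha_1}\cdots x_{i_k}^{\alpha_k}$. Composition tableaux: the diagram of $\alpha$ has $\alpha_i$ cells in row $i$ (from the top, cells $(i,j)$ in matrix notation); a composition tableau of shape $\alpha$ is a filling $T$ by positive integers with (CT1) rows weakly decreasing left to right; (CT2) leftmost column strictly increasing top to bottom; (CT3) for cells $(i,k),(j,k)$ of the diagram with $i<j$: if $\alpha_i\ge\alpha_j$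 (and $k\ge2$) then $T(j,k)<T(i,k)$ or $T(i,k-1)<T(j,k)$; if $\alpha_i<\alpha_j$ then $T(j,k)<T(i,k)$ or $T(i,k)<T(j,k+1)$. With $x^T=\prod_i x_i^{\#\{\text{entries equal to }i\}}$, the quasisymmetric Schur polynomial is $\mathcal{S}_\alpha(x_1,\dots,x_n)=\sum_T x^T$ over composition tableaux of shape $\alpha$ with entries in $\{1,\dots,n\}$. Revlex order: $\bm\lambda(\alpha)$ is the partition obtained by sorting the parts of $\alpha$ decreasingly; partitions are compared lexicographically ($\lambda>_{\mathrm{lex}}\mu$ iff the first nonzero entry of $\lambda-\mu$ is positive). For compositions $\alpha,\gamma$ of the same size, $\alpha\succ\gamma$ iff either $\bm\lambda(\alpha)>_{\mathrm{lex}}\bm\lambda(\gamma)$, or $\bm\lambda(\alpha)=\bm\lambda(\gamma)$ and $\alpha$ is lexicographically larger than $\gamma$ when both are read from right to left; $\alpha\prec\gamma$ means $\gamma\succ\alpha$. (E.g. $4\succ13\succ31\succ22\succ112\succ121\succ211\succ1111$.) *)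

From mathcomp Require Import all_boot all_order all_algebra.
From mathcomp Require Import mpoly.
Set Implicit Arguments. Unset Strict Implicit. Unset Printing Implicit Defensive.
Import GRing.Theory.
Local Open Scope ring_scope.

Definition is_comp (a : seq nat) : bool := all (fun k => 0 < k)%N a.

(* Variables x_1..x_n are 'X_i for i : 'I_n (i represents index i+1). *)

Definition Mmon (n : nat) (a : seq nat) : {mpoly rat[n]} :=
  \sum_(t : (size a).-tuple 'I_n | sorted (fun x y : 'I_n => (x < y)%N) t)
     \prod_(p <- zip (tval t) a) 'X_p.1 ^+ p.2.

Fixpoint rows_of (n k : nat) : seq (seq 'I_n) :=
  if k is k'.+1 then [seq x :: r | x <- ord_enum n, r <- rows_of n k']
  else [:: [::]].

(* All fillings of the diagram of shape a (row i has a_i cells) with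
   entries in 'I_n; a filling is the list of its rows, top to bottom. *)
Definition fillings (n : nat) (a : seq nat) : seq (seq (seq 'I_n)) :=
  foldr (fun k acc => [seq r :: T | r <- rows_of n k, T <- acc]) [:: [::]] a.

(* Entry in row i, column k (both 0-based) as a natural number;
   the entry value v : 'I_n stands for the integer v+1, which does not
   affect any comparison. *)
Definition ent (n : nat) (T : seq (seq 'I_n)) (i k : nat) : nat :=
  nth 0%N (map val (nth [::] T i)) k.

(* Composition tableau conditions (0-based indices: column k here is
   column k+1 of the paper). *)
Definition is_CT (n : nat) (a : seq nat) (T : seq (seq 'I_n)) : bool :=
  all (fun r => sorted (fun x y : 'I_n => (y <= x)%N) r) T &&
  all (fun i => all (fun j =>
     (i < j)%N ==> (ent T i 0 < ent T j 0)%N)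
     (iota 0 (size a))) (iota 0 (size a)) &&
  all (fun i => all (fun j => all (fun k =>
     [&& (i < j)%N, (k < nth 0%N a i)%N & (k < nth 0%N a j)%N] ==>
     (if (nth 0%N a j <= nth 0%N a i)%N then
        (0 < k)%N ==>
        ((ent T j k < ent T i k)%N || (ent T i k.-1 < ent T j k)%N)
      else
        ((ent T j k < ent T i k)%N || (ent T i k < ent T j k.+1)%N))
     ) (iota 0 (nth 0%N a i))) (iota 0 (size a))) (iota 0 (size a)).

Definition monoT (n : nat) (T : seq (seq 'I_n)) : {mpoly rat[n]} :=
  \prod_(r <- T) \prod_(x <- r) 'X_x.

Definition QS (n : nat) (a : seq nat) : {mpoly rat[n]} :=
  \sum_(T <- fillings n a | is_CT a T) monoT T.

Definition lam (a : seq nat) : seq nat := sort geq a.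

Definition lex_gt (l m : seq nat) : Prop :=
  exists i : nat, (nth 0 m i < nth 0 l i)%N /\
                  forall j, (j < i)%N -> nth 0 l j = nth 0 m j.

Definition revlex_gt (a g : seq nat) : Prop :=
  sumn a = sumn g /\
  (lex_gt (lam a) (lam g) \/ (lam a = lam g /\ lex_gt (rev a) (rev g))).

Definition QS_expansion (n : nat) (f : {mpoly rat[n]})
    (s : seq (seq nat)) (c : seq nat -> rat) : Prop :=
  [/\ uniq s,
      (forall g, g \in s -> is_comp g /\ (size g <= n)%N),
      (forall g, c g != 0 -> g \in s) &
      f = \sum_(g <- s) c g *: QS n g].

From mathcomp Require Import all_boot all_order all_algebra.
From mathcomp Require Import mpoly.
From mathcomp Require Import zify.
Set Implicit Arguments. Unset Strict Implicit. Unset Printing Implicit Defensive.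
Import GRing.Theory.

(* By quasisymmetry, S_g = sum_b K_(g,b) M_b, where K_(g,b) counts the composition
   tableaux of shape g and content b.  The tableau whose row i is filled with i is the
   only one of shape and content g, so K_(g,g) = 1.  If K_(g,b) <> 0 then b = g or
   g > b in revlex: the entries of a column are distinct, which bounds the parts of b
   above any threshold by as many largest parts of g, hence lam(g) >=lex lam(b); and when
   the lengths agree the first column forces the entries of row i to be at most i, so
   every suffix sum of b is at most that of g, hence rev(g) >=lex rev(b).  A unitriangular
   matrix inverts to a unitriangular one: M_a is expanded by induction along revlex, and in
   any expansion a revlex-maximal nonzero coefficient above a would be the coefficient of
   a monomial x^b that does not occur in M_a. *)

Section NatSequences.
Local Open Scope nat_scope.

Lemma sumn_take_nth (l : seq nat) i : sumn (take i l) = \sum_(0 <= r < i) nth 0 l r.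
Proof.
elim: i l => [|i IH] l; first by rewrite take0 big_geq.
case: l => [|x l] /=; first by rewrite big1 // => r _; rewrite nth_nil.
by rewrite big_nat_recl //= IH.
Qed.

Lemma sumn_drop_nth (l : seq nat) p : sumn (drop p l) = \sum_(p <= r < size l) nth 0 l r.
Proof.
case: (leqP p (size l)) => Hp; last by rewrite drop_oversize ?(ltnW Hp) // big_geq // ltnW.
have := sumn_take_nth l (size l); rewrite take_size => Hs.
have := congr1 sumn (cat_take_drop p l); rewrite sumn_cat sumn_take_nth Hs.
rewrite (big_cat_nat (leq0n p) Hp) /=; lia.
Qed.

Lemma nth_leq_sumn (l : seq nat) i : nth 0 l i <= sumn l.
Proof.
elim: l i => [|x l IH] [|i] //=; first exact: leq_addr.
exact: leq_trans (IH i) (leq_addl _ _).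
Qed.

Lemma size_leq_sumn (l : seq nat) : is_comp l -> size l <= sumn l.
Proof. by elim: l => [|x l IH] //= /andP[Hx /IH]; lia. Qed.

Lemma mul_size_filter_leq_sumn x (s : seq nat) :
  x * size (filter (leq x) s) <= sumn (filter (leq x) s).
Proof.
elim: s => [|v s IH] /=; first by rewrite muln0.
by case: ifP => Hv //=; rewrite mulnS leq_add.
Qed.

Lemma count_nth_sum (P : pred nat) (l : seq nat) :
  count P l = \sum_(0 <= r < size l) P (nth 0 l r).
Proof.
elim: l => [|x l IH] /=; first by rewrite big_geq.
by rewrite big_nat_recl //= IH.
Qed.

Lemma sorted_geq_nth (l : seq nat) i r : sorted geq l -> i <= r -> nth 0 l r <= nth 0 l i.
Proof.
move=> Hs Hir; case: (ltnP r (size l)) => Hr; last by rewrite nth_default.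
apply: (sorted_leq_nth (leT := geq) _ _ 0 Hs) => //.
- by move=> a b c Hba Hac; apply: leq_trans Hac Hba.
- exact: leqnn.
- exact: leq_ltn_trans Hr.
Qed.

Lemma rev_comp (l : seq nat) : is_comp l -> is_comp (rev l).
Proof. by rewrite /is_comp all_rev. Qed.

Lemma comp_eq_nth (l m : seq nat) : is_comp l -> is_comp m ->
  (forall r, nth 0 l r = nth 0 m r) -> l = m.
Proof.
move=> Hl Hm E.
have Es : size l = size m.
  case: (ltngtP (size l) (size m)) => [Hs|Hs|//].
  - by move/(all_nthP 0): Hm => /(_ _ Hs); rewrite -E nth_default.
  - by move/(all_nthP 0): Hl => /(_ _ Hs); rewrite E nth_default.
by apply: (eq_from_nth (x0 := 0)) => // r _.
Qed.

Lemma nth_eq_or_first_diff (l m : seq nat) :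
  (forall r, nth 0 l r = nth 0 m r) \/
  exists i, nth 0 l i != nth 0 m i /\ forall r, r < i -> nth 0 l r = nth 0 m r.
Proof.
have [/hasP[r0 _ Hr0]|/hasPn Heq] :=
  boolP (has (fun r => nth 0 l r != nth 0 m r) (iota 0 (size l + size m))).
  have Hex : exists r, nth 0 l r != nth 0 m r by exists r0.
  right; have [i Hi Hmin] := ex_minnP Hex.
  exists i; split=> // r Hri; apply/eqP; apply: contraTT Hri => /Hmin.
  by rewrite -leqNgt.
left=> r; case: (ltnP r (size l + size m)) => Hr.
  by apply/eqP; rewrite -[_ == _]negbK Heq // mem_iota.
by rewrite !nth_default //; lia.
Qed.

Lemma sum_nat_count (T : Type) (P : pred T) (s : seq T) :
  \sum_(x <- s) (P x : nat) = count P s.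
Proof. by elim: s => [|x s IH]; rewrite ?big_nil ?big_cons ?IH. Qed.

Lemma count_iota_sum (P : pred nat) k : count P (iota 0 k) = \sum_(0 <= i < k) P i.
Proof.
elim: k => [|k IH]; first by rewrite big_geq.
by rewrite big_nat_recr // -IH -[k.+1]addn1 iotaD count_cat /= addn0.
Qed.

Lemma sum_eq_nat x p k : x < k -> \sum_(p <= v < k) (x == v) = (p <= x).
Proof.
elim: k => [|k IH] // Hx; case: (leqP p k) => Hpk; last first.
  by rewrite big_geq // leqNgt (leq_ltn_trans (Hx : x <= k) Hpk).
rewrite big_nat_recr //=; case: (eqVneq x k) => [->|Hne].
  rewrite big_nat_cond big1 ?Hpk // => v /andP[/andP[_ Hv] _].
  by case: eqP => // E; move: Hv; rewrite E ltnn.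
by rewrite addn0 IH // ltn_neqAle Hne -ltnS.
Qed.

Lemma count_leq_sum_count_mem (s : seq nat) p k : all (fun x => x < k) s ->
  count (leq p) s = \sum_(p <= v < k) count_mem v s.
Proof.
elim: s => [|x s IH] /=; first by move=> _; rewrite big1.
by move=> /andP[Hx Hs]; rewrite big_split /= IH // sum_eq_nat.
Qed.

Lemma sum_count_mem (V s : seq nat) : uniq V ->
  \sum_(v <- V) count_mem v s = count (mem V) s.
Proof.
move=> HV; elim: s => [|x s IH] /=; first by rewrite big1.
rewrite big_split /= IH; congr (_ + _).
rewrite (sum_nat_count (fun v => x == v)) -count_uniq_mem //.
by apply: eq_count => v; rewrite eq_sym.
Qed.

Lemma eq_from_leq_sum_nat (F G : nat -> nat) p q r0 : p <= r0 < q ->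
  (forall r, p <= r < q -> F r <= G r) ->
  \sum_(p <= r < q) F r = \sum_(p <= r < q) G r -> F r0 = G r0.
Proof.
move=> /andP[H1 H2] Hle.
rewrite !(big_cat_nat H1 (ltnW H2)) !(big_ltn H2) /=.
have A : \sum_(p <= r < r0) F r <= \sum_(p <= r < r0) G r.
  rewrite big_nat_cond [X in _ <= X]big_nat_cond; apply: leq_sum => r /andP[/andP[Hr1 Hr2] _].
  by apply: Hle; rewrite Hr1 (ltn_trans Hr2).
have B : \sum_(r0.+1 <= r < q) F r <= \sum_(r0.+1 <= r < q) G r.
  rewrite big_nat_cond [X in _ <= X]big_nat_cond; apply: leq_sum => r /andP[/andP[Hr1 Hr2] _].
  by apply: Hle; rewrite Hr2 (leq_trans H1 (ltnW Hr1)).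
have C : F r0 <= G r0 by apply: Hle; rewrite H1 H2.
lia.
Qed.

Lemma sum_ltn_leq N v : \sum_(0 <= c < N) (c < v) <= v.
Proof.
elim: N => [|N IH]; first by rewrite big_geq.
rewrite big_nat_recr //=; case: ltnP => H; last by rewrite addn0.
have : \sum_(0 <= c < N) (c < v) <= N.
  by rewrite -{2}(subn0 N) -[N - 0]muln1 -sum_nat_const_nat; apply: leq_sum => c _; case: ltnP.
lia.
Qed.

Lemma minn_sum_antitone (f : nat -> bool) j M :
  (forall r r', r' <= r -> f r -> f r') ->
  minn j (\sum_(0 <= r < M) f r) <= \sum_(0 <= r < j) f r.
Proof.
move=> Ha; case: (leqP M j) => HMj.
  by rewrite geq_min (big_cat_nat (leq0n M) HMj) /= leq_addr orbT.
rewrite (big_cat_nat (leq0n j) (ltnW HMj)) /=.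
case Hj: (f j).
  have -> : \sum_(0 <= r < j) f r = j.
    rewrite -{2}(subn0 j) -[j - 0]muln1 -sum_nat_const_nat.
    by apply: eq_big_nat => r /andP[_ Hr]; rewrite (Ha j r (ltnW Hr) Hj).
  by rewrite geq_minl.
have -> : \sum_(j <= r < M) f r = 0.
  rewrite big_nat_cond big1 // => r /andP[/andP[Hr _] _].
  by case Hfr: (f r) => //; move: (Ha r j Hr Hfr); rewrite Hj.
by rewrite addn0 geq_minr.
Qed.

(* Conjugate partitions: [count (fun v => c < v) l] is the length of column [c]. *)
Lemma sum_minn_count_ltn (l : seq nat) j N : sorted geq l ->
  \sum_(0 <= c < N) minn j (count (fun v => c < v) l) <= \sum_(0 <= r < j) nth 0 l r.
Proof.
move=> Hs.
apply: leq_trans (_ : \sum_(0 <= c < N) \sum_(0 <= r < j) (c < nth 0 l r) <= _).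
  apply: leq_sum => c _; rewrite count_nth_sum; apply: minn_sum_antitone.
  by move=> r r' Hrr' Hcr; apply: leq_trans Hcr (sorted_geq_nth Hs Hrr').
by rewrite exchange_big_nat /=; apply: leq_sum => r _; apply: sum_ltn_leq.
Qed.

Lemma seq_argmax (T : eqType) (s : seq T) (P : pred T) (f : T -> nat) :
  has P s -> exists2 x, (x \in s) && P x & forall y, y \in s -> P y -> f y <= f x.
Proof.
elim: s => [|y s IH] //=; case: (boolP (has P s)) => [/IH [x /andP[Hx Px] Hmax] _|Hno].
  case: (boolP (P y && (f x <= f y))) => [/andP[Py Hxy]|Hn].
    exists y; first by rewrite inE eqxx.
    by move=> z; rewrite inE => /orP[/eqP ->//|Hz /(Hmax z Hz)/leq_trans]; apply.
  exists x; first by rewrite inE Hx orbT.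
  move=> z; rewrite inE => /orP[/eqP ->|/Hmax//] Pz.
  by move: Hn; rewrite Pz /= -ltnNge => /ltnW.
rewrite orbF => Py; exists y; first by rewrite inE eqxx.
by move=> z; rewrite inE => /orP[/eqP ->//|Hz Pz]; case/hasP: Hno; exists z.
Qed.

Lemma count_leq_cancel_in (T : eqType) (L : seq T) (P1 P2 : pred T) (f g : T -> T) :
  uniq L -> (forall x, x \in L -> P1 x -> (f x \in L) && P2 (f x)) ->
  (forall x, x \in L -> P1 x -> g (f x) = x) -> count P1 L <= count P2 L.
Proof.
move=> HL Hf Hg; rewrite -!size_filter.
rewrite -(size_map f); apply: uniq_leq_size.
  rewrite map_inj_in_uniq ?filter_uniq // => x y.
  rewrite !mem_filter => /andP[Px Lx] /andP[Py Ly] E.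
  by rewrite -(Hg x Lx Px) -(Hg y Ly Py) E.
move=> z /mapP[x]; rewrite mem_filter => /andP[Px Lx] ->.
by rewrite mem_filter andbC Hf.
Qed.

End NatSequences.

Section Lexicographic.
Local Open Scope nat_scope.

Lemma lex_gt_of_dominance (l m : seq nat) :
  (forall j, \sum_(0 <= r < j) nth 0 l r <= \sum_(0 <= r < j) nth 0 m r) ->
  (forall r, nth 0 l r = nth 0 m r) \/ lex_gt m l.
Proof.
move=> Hdom; case: (nth_eq_or_first_diff l m) => [|[i [Hne Hpre]]]; first by left.
right; exists i; split; last by move=> r /Hpre.
have := Hdom i.+1; rewrite !big_nat_recr //=.
rewrite (eq_big_nat _ _ (F2 := nth 0 m)) => [|r /andP[_ /Hpre]] //.
by rewrite leq_add2l leq_eqVlt (negbTE Hne).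
Qed.

(* Only the thresholds [j = count (leq x) lb] are needed: if the first difference [i]
   had [lb_i > lg_i], the threshold [x = lb_i] would break the hypothesis. *)
Lemma lex_gt_of_threshold_sums (lb lg : seq nat) : sorted geq lb -> sorted geq lg ->
  (forall x, 0 < x ->
     sumn (filter (leq x) lb) <= \sum_(0 <= r < count (leq x) lb) nth 0 lg r) ->
  (forall r, nth 0 lb r = nth 0 lg r) \/ lex_gt lg lb.
Proof.
move=> sb sg Hthr; case: (nth_eq_or_first_diff lb lg) => [|[i [Hne Hpre]]]; first by left.
right; exists i; split; last by move=> r /Hpre.
rewrite ltn_neqAle Hne leqNgt /=; apply/negP => Hgt.
set x := nth 0 lb i in Hgt; set y := nth 0 lg i in Hgt.
have Hi : i < size lb by case: ltnP => // Hs; move: Hgt; rewrite /x nth_default.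
have Hall : all (leq x) (take i lb).
  apply/(all_nthP 0) => r; rewrite size_take Hi => Hr.
  by rewrite nth_take // sorted_geq_nth // ltnW.
set D := filter (leq x) (drop i lb).
have HD : 0 < size D by rewrite /D (drop_nth 0 Hi) /= leqnn.
have Hsum : sumn (filter (leq x) lb) = \sum_(0 <= r < i) nth 0 lb r + sumn D.
  by rewrite -{1}(cat_take_drop i lb) filter_cat sumn_cat (all_filterP Hall) sumn_take_nth.
have Hcnt : count (leq x) lb = i + size D.
  move: (Hall); rewrite all_count => /eqP Hc.
  by rewrite -{1}(cat_take_drop i lb) count_cat Hc (size_takel (ltnW Hi)) size_filter.
have Hlg : \sum_(0 <= r < i + size D) nth 0 lg r
           <= \sum_(0 <= r < i) nth 0 lg r + size D * y.
  rewrite (big_cat_nat (leq0n i) (leq_addr _ _)) /= leq_add2l.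
  rewrite -{2}(addKn i (size D)) -sum_nat_const_nat.
  by rewrite big_nat_cond [X in _ <= X]big_nat_cond; apply: leq_sum => r /andP[/andP[Hr _] _];
     apply: sorted_geq_nth.
have Hpre' : \sum_(0 <= r < i) nth 0 lb r = \sum_(0 <= r < i) nth 0 lg r.
  by apply: eq_big_nat => r /andP[_ /Hpre].
have := Hthr x (leq_ltn_trans (leq0n y) Hgt); rewrite Hsum Hcnt.
have := mul_size_filter_leq_sumn x (drop i lb); rewrite -/D.
have : size D * y < size D * x by rewrite ltn_pmul2l.
lia.
Qed.

Lemma lam_sorted (b : seq nat) : sorted geq (lam b).
Proof. by apply: sort_sorted => x y; apply: leq_total. Qed.

Lemma lam_perm (b : seq nat) : perm_eq (lam b) b.
Proof. by rewrite /lam perm_sort perm_refl. Qed.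

Lemma lam_comp (b : seq nat) : is_comp b -> is_comp (lam b).
Proof. by rewrite /is_comp (perm_all _ (lam_perm b)). Qed.

Lemma sumn_lam (b : seq nat) : sumn (lam b) = sumn b.
Proof. exact/perm_sumn/lam_perm. Qed.

Fixpoint lexrank (B L : nat) (l : seq nat) : nat :=
  if L is L'.+1 then nth 0 l 0 * B ^ L' + lexrank B L' (behead l) else 0.

Lemma lexrank_lt B L l : (forall r, nth 0 l r < B) -> lexrank B L l < B ^ L.
Proof.
elim: L l => [|L IH] l Hl /=; first by rewrite expn0.
have : lexrank B L (behead l) < B ^ L by apply: IH => r; rewrite nth_behead.
have : nth 0 l 0 * B ^ L + B ^ L <= B * B ^ L by rewrite -mulSnr leq_mul2r Hl orbT.
rewrite expnS; lia.
Qed.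

Lemma lexrank_lex B L l m : (forall r, nth 0 l r < B) -> (forall r, nth 0 m r < B) ->
  (forall r, L <= r -> nth 0 l r = 0) -> lex_gt l m -> lexrank B L m < lexrank B L l.
Proof.
elim: L l m => [|L IH] l m Hl Hm Hz [i [Hi Hp]] /=; first by move: Hi; rewrite Hz.
case: i Hi Hp => [|i] Hi Hp.
  have : lexrank B L (behead m) < B ^ L by apply: lexrank_lt => r; rewrite nth_behead.
  have : nth 0 m 0 * B ^ L + B ^ L <= nth 0 l 0 * B ^ L by rewrite -mulSnr leq_mul2r Hi orbT.
  lia.
rewrite (Hp 0) // ltn_add2l; apply: IH => [r|r|r Hr|]; rewrite ?nth_behead //; first exact: Hz.
by exists i; split=> [|j Hj]; rewrite !nth_behead //; apply: Hp.
Qed.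

Lemma comp_nth_bounds (l : seq nat) : is_comp l ->
  (forall r, nth 0 l r < (sumn l).+1) /\ (forall r, sumn l <= r -> nth 0 l r = 0).
Proof.
move=> Hl; split=> r; first by rewrite ltnS nth_leq_sumn.
by move=> Hr; rewrite nth_default // (leq_trans (size_leq_sumn Hl)).
Qed.

(* A composition of [d] has at most [d] parts, each at most [d], so reading [lam a]
   and [rev a] as [d]-digit numerals in base [d + 1] embeds the revlex order into [nat]. *)
Definition revlex_rank (d : nat) (a : seq nat) : nat :=
  lexrank d.+1 d (lam a) * d.+1 ^ d + lexrank d.+1 d (rev a).

Lemma revlex_rank_lt a b : is_comp a -> is_comp b -> revlex_gt a b ->
  revlex_rank (sumn a) b < revlex_rank (sumn a) a.
Proof.
move=> Ha Hb [Hs H]; rewrite /revlex_rank.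
have [Bla Zla] := comp_nth_bounds (lam_comp Ha).
have [Blb _] := comp_nth_bounds (lam_comp Hb).
have [Bra Zra] := comp_nth_bounds (rev_comp Ha).
have [Brb _] := comp_nth_bounds (rev_comp Hb).
rewrite sumn_lam in Bla Zla; rewrite sumn_lam -Hs in Blb.
rewrite sumn_rev in Bra Zra; rewrite sumn_rev -Hs in Brb.
set d := sumn a in Bla Zla Blb Bra Zra Brb *.
have Hrb := lexrank_lt d Brb.
case: H => [L|[E L]]; last by rewrite E ltn_add2l; apply: lexrank_lex.
have : (lexrank d.+1 d (lam b)).+1 * d.+1 ^ d <= lexrank d.+1 d (lam a) * d.+1 ^ d.
  by rewrite leq_mul2r (lexrank_lex Bla Blb Zla L) orbT.
rewrite mulSn; lia.
Qed.

End Lexicographic.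

Section WeakTableau.
Local Open Scope nat_scope.

Definition entry (R : seq (seq nat)) i c := nth 0 (nth [::] R i) c.

(* The consequences of CT1-CT3 that the triangularity argument uses, for a filling [R]
   of shape [g], read row by row, whose content is [b]: the value [v] occurs [b_v] times. *)
Definition weak_tableau (R : seq (seq nat)) (g b : seq nat) :=
  [/\ map size R = g,
      (forall i c c', i < size g -> c <= c' -> c' < nth 0 g i -> entry R i c' <= entry R i c),
      (forall i j, i < j -> j < size g -> entry R i 0 < entry R j 0),
      (forall i j c, i < j -> j < size g -> c < nth 0 g i -> c < nth 0 g j ->
         entry R i c != entry R j c) &
      (forall v, count_mem v (flatten R) = nth 0 b v)].

Lemma count_cells (P : pred nat) R g : map size R = g ->
  count P (flatten R) = \sum_(0 <= i < size g) \sum_(0 <= c < nth 0 g i) P (entry R i c).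
Proof.
move=> Hsh; rewrite count_flatten sumnE big_map (big_nth [::]) -Hsh size_map.
apply: eq_big_nat => i /andP[_ Hi].
by rewrite count_nth_sum (nth_map [::]).
Qed.

Variables (R : seq (seq nat)) (g b : seq nat).
Hypotheses (Hg : is_comp g) (Hb : is_comp b) (HT : weak_tableau R g b).

Let Hsh : map size R = g. Proof. by case: HT. Qed.
Let Hrow i c c' : i < size g -> c <= c' -> c' < nth 0 g i -> entry R i c' <= entry R i c.
Proof. by case: HT => _ H _ _ _; apply: H. Qed.
Let Hcol0 i j : i < j -> j < size g -> entry R i 0 < entry R j 0.
Proof. by case: HT => _ _ H _ _; apply: H. Qed.
Let Hcol i j c : i < j -> j < size g -> c < nth 0 g i -> c < nth 0 g j ->
  entry R i c != entry R j c.
Proof. by case: HT => _ _ _ H _; apply: H. Qed.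
Let Hcont v : count_mem v (flatten R) = nth 0 b v.
Proof. by case: HT. Qed.

Lemma entries_lt_size : all (fun x => x < size b) (flatten R).
Proof.
apply/allP => x Hx; case: ltnP => // Hs.
have : 0 < count_mem x (flatten R) by rewrite -has_count has_pred1.
by rewrite Hcont nth_default.
Qed.

Lemma entry_lt_size i c : i < size g -> c < nth 0 g i -> entry R i c < size b.
Proof.
have HszR : size R = size g by rewrite -Hsh size_map.
move=> Hi Hc; apply: (allP entries_lt_size); apply/flattenP.
exists (nth [::] R i); first by rewrite mem_nth // HszR.
by rewrite mem_nth // -(nth_map _ 0) ?HszR // Hsh.
Qed.

Lemma weak_tableau_sumn : sumn b = sumn g.
Proof.
have := sumn_take_nth b (size b); rewrite take_size => ->.
under eq_bigr do rewrite -Hcont.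
rewrite -count_leq_sum_count_mem ?entries_lt_size //.
by rewrite (eq_count (a2 := predT)) // count_predT size_flatten /shape Hsh.
Qed.

Lemma shape_pos i : i < size g -> 0 < nth 0 g i.
Proof. exact: (all_nthP 0 Hg). Qed.

(* A column has distinct entries, so it holds at most [size V] entries from [V]. *)
Lemma count_flatten_mem_le (V : seq nat) :
  count (mem V) (flatten R) <= \sum_(0 <= c < sumn g) minn (size V) (count (fun v => c < v) g).
Proof.
rewrite (count_cells _ Hsh).
have -> : \sum_(0 <= i < size g) \sum_(0 <= c < nth 0 g i) (entry R i c \in V)
   = \sum_(0 <= i < size g) \sum_(0 <= c < sumn g) ((c < nth 0 g i) && (entry R i c \in V)).
  apply: eq_bigr => i _; rewrite (big_cat_nat (leq0n _) (nth_leq_sumn g i)) /=.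
  have -> : \sum_(nth 0 g i <= c < sumn g) ((c < nth 0 g i) && (entry R i c \in V)) = 0.
    by rewrite big_nat_cond big1 // => c /andP[/andP[Hc _] _]; rewrite ltnNge Hc.
  by rewrite addn0; apply: eq_big_nat => c /andP[_ ->].
rewrite exchange_big_nat /=; apply: leq_sum => c _; rewrite leq_min; apply/andP; split.
- set L := [seq entry R i c | i <- iota 0 (size g) & (c < nth 0 g i) && (entry R i c \in V)].
  have -> : \sum_(0 <= i < size g) ((c < nth 0 g i) && (entry R i c \in V)) = size L.
    by rewrite size_map size_filter count_iota_sum.
  apply: uniq_leq_size; last first.
    by move=> v /mapP[i]; rewrite mem_filter => /andP[/andP[_ HV] _] ->.
  rewrite map_inj_in_uniq ?filter_uniq ?iota_uniq // => i j.
  rewrite !mem_filter !mem_iota /= => /andP[/andP[Hci _] Hi] /andP[/andP[Hcj _] Hj] E.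
  case: (ltngtP i j) => // Hij.
  + by move: (Hcol Hij Hj Hci Hcj); rewrite E eqxx.
  + by move: (Hcol Hij Hi Hcj Hci); rewrite E eqxx.
- by rewrite count_nth_sum; apply: leq_sum => i _; case: (c < _); rewrite ?leq_b1.
Qed.

Lemma weak_tableau_lam : lam b = lam g \/ lex_gt (lam g) (lam b).
Proof.
suff Hthr : forall x, 0 < x -> sumn (filter (leq x) (lam b))
                  <= \sum_(0 <= r < count (leq x) (lam b)) nth 0 (lam g) r.
  case: (lex_gt_of_threshold_sums (lam_sorted b) (lam_sorted g) Hthr) => [E|]; last by right.
  by left; apply: comp_eq_nth E; apply: lam_comp.
move=> x _; have /permP cb := lam_perm b; have /permP cg := lam_perm g.
rewrite (perm_sumn (perm_filter _ (lam_perm b))) cb.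
apply: leq_trans (sum_minn_count_ltn _ (sumn g) (lam_sorted g)).
under eq_bigr do rewrite cg.
set V := [seq v <- iota 0 (size b) | x <= nth 0 b v].
have Hbm : b = map (nth 0 b) (iota 0 (size b)) by rewrite map_nth_iota0 // take_size.
have -> : count (leq x) b = size V by rewrite {1}Hbm count_map size_filter.
apply: leq_trans (count_flatten_mem_le V).
rewrite {1}Hbm filter_map sumnE big_map -sum_count_mem ?filter_uniq ?iota_uniq //.
by apply: eq_leq; apply: eq_bigr => v _; rewrite Hcont.
Qed.

Section SameLength.
Hypothesis Hsz : size b = size g.

(* The first column increases strictly and its entries are below [size g]. *)
Lemma first_col_bound d i : i + d < size g -> entry R i 0 + d < size g.
Proof.
elim: d i => [|d IH] i Hid.
  by rewrite addn0 -Hsz entry_lt_size ?shape_pos // -(addn0 i).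
have H1 : entry R i 0 < entry R i.+1 0.
  by apply: Hcol0 => //; apply: leq_ltn_trans Hid; rewrite addnS ltnS leq_addr.
have := IH i.+1; rewrite addSnnS => /(_ Hid); lia.
Qed.

Lemma entry_le_row i c : i < size g -> c < nth 0 g i -> entry R i c <= i.
Proof.
move=> Hi Hc; apply: leq_trans (Hrow Hi (leq0n c) Hc) _.
have := @first_col_bound (size g - i.+1) i; lia.
Qed.

Definition row_count_geq p i := \sum_(0 <= c < nth 0 g i) (p <= entry R i c).

Lemma row_count_geq_le p i : row_count_geq p i <= nth 0 g i.
Proof.
rewrite /row_count_geq -{2}(subn0 (nth 0 g i)) -[_ - 0]muln1 -sum_nat_const_nat.
by apply: leq_sum => c _; case: (p <= _).
Qed.

(* Entries of row [i] are at most [i], so the values [>= p] all lie in the rows [>= p]. *)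
Lemma sumn_drop_content p : p <= size g ->
  sumn (drop p b) = \sum_(p <= i < size g) row_count_geq p i.
Proof.
move=> Hp; rewrite sumn_drop_nth Hsz.
under eq_bigr do rewrite -Hcont.
rewrite -(@count_leq_sum_count_mem _ p (size g)); last by rewrite -Hsz entries_lt_size.
rewrite (count_cells _ Hsh) (big_cat_nat (leq0n p) Hp) /= [X in X + _]big_nat_cond big1 //.
move=> i /andP[/andP[_ Hi] _]; rewrite big_nat_cond big1 // => c /andP[/andP[_ Hc] _].
have Hig : i < size g by apply: leq_trans Hi Hp.
by rewrite leqNgt (leq_ltn_trans (entry_le_row Hig Hc) Hi).
Qed.

Lemma sumn_drop_le p : sumn (drop p b) <= sumn (drop p g).
Proof.
case: (leqP p (size g)) => Hp; last by rewrite drop_oversize // Hsz ltnW.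
rewrite sumn_drop_content // sumn_drop_nth big_nat_cond [X in _ <= X]big_nat_cond.
by apply: leq_sum => i _; apply: row_count_geq_le.
Qed.

Lemma weak_tableau_rev : b = g \/ lex_gt (rev g) (rev b).
Proof.
case: (@lex_gt_of_dominance (rev b) (rev g)) => [j|E|]; last by right.
  by rewrite -!sumn_take_nth !take_rev !sumn_rev Hsz sumn_drop_le.
by left; rewrite -(revK b) -(revK g); congr rev; apply: comp_eq_nth E; apply: rev_comp.
Qed.

(* With [b = g] all the suffix inequalities are equalities, so row [i] holds only values [>= i]. *)
Lemma weak_tableau_diag : b = g -> forall i c, i < size g -> c < nth 0 g i -> entry R i c = i.
Proof.
move=> Ebg i c Hi Hc; apply/eqP; rewrite eqn_leq entry_le_row //=.
have Hrow_full : row_count_geq i i = nth 0 g i.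
  apply: (@eq_from_leq_sum_nat (row_count_geq i) (nth 0 g) i (size g)); rewrite ?leqnn //.
    by move=> r _; apply: row_count_geq_le.
  by rewrite -sumn_drop_content ?(ltnW Hi) // -sumn_drop_nth Ebg.
have : (i <= entry R i c) = 1 :> nat.
  apply: (@eq_from_leq_sum_nat (fun c => i <= entry R i c) (fun=> 1) 0 (nth 0 g i)).
  - by rewrite Hc.
  - by move=> r _; rewrite leq_b1.
  - by rewrite sum_nat_const_nat muln1 subn0; apply: Hrow_full.
by case: leqP.
Qed.

End SameLength.

Lemma weak_tableau_revlex : b = g \/ revlex_gt g b.
Proof.
have Hs := esym weak_tableau_sumn.
case: weak_tableau_lam => [E|L]; last by right; split=> //; left.
have Hsz : size b = size g by rewrite -(perm_size (lam_perm b)) -(perm_size (lam_perm g)) E.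
by case: (weak_tableau_rev Hsz) => [->|L]; [left|right; split=> //; right].
Qed.

End WeakTableau.

Section Fillings.
Local Open Scope nat_scope.
Variable n : nat.

Lemma mem_rows_of k (r : seq 'I_n) : (r \in rows_of n k) = (size r == k).
Proof.
elim: k r => [|k IH] [|x r] //=; first by apply/allpairsP => [[p [_ _]]].
apply/allpairsP/idP => [[[y r'] [_ Hr' /= [_ ->]]]|Hr]; first by rewrite /= eqSS -IH.
by exists (x, r); rewrite mem_ord_enum IH.
Qed.

Lemma uniq_rows_of k : uniq (rows_of n k).
Proof.
elim: k => [|k IH] //=; apply: allpairs_uniq => //; first exact: ord_enum_uniq.
by move=> [x r] [y r'] _ _ /= [-> ->].
Qed.

Lemma mem_fillings a (T : seq (seq 'I_n)) : (T \in fillings n a) = (map size T == a).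
Proof.
elim: a T => [|k a IH] [|r T] //=; first by apply/allpairsP => [[p [_ _]]].
apply/allpairsP/idP => [[[r' T'] [Hr HT /= [-> ->]]]|/eqP[Hr HT]].
  by move: Hr HT; rewrite mem_rows_of IH /= => /eqP -> /eqP ->.
by exists (r, T); rewrite mem_rows_of IH Hr HT.
Qed.

Lemma uniq_fillings a : uniq (fillings n a).
Proof.
elim: a => [|k a IH] //=; apply: allpairs_uniq => //; first exact: uniq_rows_of.
by move=> [x r] [y r'] _ _ /= [-> ->].
Qed.

Definition entries (T : seq (seq 'I_n)) : seq nat := map val (flatten T).

Definition content (T : seq (seq 'I_n)) : 'X_{1..n} :=
  [multinom count_mem (val i) (entries T) | i < n].

Lemma count_entries (T : seq (seq 'I_n)) (i : 'I_n) :
  count_mem (val i) (entries T) = count_mem i (flatten T).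
Proof. by rewrite count_map; apply: eq_count => x /=; rewrite val_eqE. Qed.

Lemma content_flatten (T : seq (seq 'I_n)) (i : 'I_n) : content T i = count_mem i (flatten T).
Proof. by rewrite mnmE count_entries. Qed.

Lemma monoT_content T : monoT T = 'X_[content T].
Proof.
rewrite /monoT; under eq_bigr do rewrite mprodXE.
rewrite mprodXE; congr ('X_[_]); apply/mnmP => i.
rewrite mnm_sumE content_flatten.
elim: T => [|r T IH]; first by rewrite big_nil.
rewrite big_cons /= count_cat -IH mnm_sumE; congr (_ + _).
by elim: r => [|x r IHr]; rewrite ?big_nil ?big_cons //= IHr mnm1E.
Qed.

Definition cell (a : seq nat) i k := (i < size a) && (k < nth 0 a i).

Lemma ent_entry (T : seq (seq 'I_n)) i k : ent T i k = entry (map (map val) T) i k.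
Proof.
rewrite /ent /entry; case: (ltnP i (size T)) => Hi; first by rewrite (nth_map [::]).
by rewrite !nth_default ?size_map.
Qed.

Lemma ent_cell (T : seq (seq 'I_n)) a i k x0 : map size T = a -> cell a i k ->
  ent T i k = val (nth x0 (nth [::] T i) k).
Proof.
move=> <- /andP[Hi Hk]; rewrite size_map in Hi; rewrite (nth_map [::]) // in Hk.
by rewrite /ent (nth_map x0).
Qed.

Lemma cell_mem_flatten (T : seq (seq 'I_n)) a i k x0 : map size T = a -> cell a i k ->
  nth x0 (nth [::] T i) k \in flatten T.
Proof.
move=> <- /andP[Hi Hk]; rewrite size_map in Hi; rewrite (nth_map [::]) // in Hk.
by apply/flattenP; exists (nth [::] T i); apply: mem_nth.
Qed.

Section CompositionTableau.
Variables (a : seq nat) (T : seq (seq 'I_n)).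
Hypotheses (Hsh : map size T = a) (HCT : is_CT a T).

Lemma CT_row_sorted : all (sorted (fun x y : 'I_n => y <= x)) T.
Proof. by case/andP: HCT => /andP[]. Qed.

Lemma CT_first_col i j : i < j -> j < size a -> ent T i 0 < ent T j 0.
Proof.
move=> Hij Hj; case/andP: HCT => /andP[_ /allP H2] _.
have := H2 i; rewrite mem_iota (ltn_trans Hij Hj) => /(_ isT) /allP /(_ j).
by rewrite mem_iota Hj Hij => /(_ isT).
Qed.

Lemma CT_triple i j k : i < j -> j < size a -> k < nth 0 a i -> k < nth 0 a j ->
  if nth 0 a j <= nth 0 a i then
    (0 < k) ==> ((ent T j k < ent T i k) || (ent T i k.-1 < ent T j k))
  else ((ent T j k < ent T i k) || (ent T i k < ent T j k.+1)).
Proof.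
move=> Hij Hj Hki Hkj; case/andP: HCT => _ /allP H3.
have := H3 i; rewrite mem_iota (ltn_trans Hij Hj) => /(_ isT) /allP /(_ j).
rewrite mem_iota Hj => /(_ isT) /allP /(_ k).
by rewrite mem_iota Hki Hij Hkj => /(_ isT).
Qed.

Lemma CT_row_dec i c c' : i < size a -> c <= c' -> c' < nth 0 a i -> ent T i c' <= ent T i c.
Proof.
move=> Hi Hcc Hc'; rewrite -Hsh size_map in Hi.
have : sorted geq (map val (nth [::] T i)).
  by rewrite sorted_map; apply: (allP CT_row_sorted); apply: mem_nth.
by move/sorted_geq_nth; apply.
Qed.

(* Equal entries in one column would force, by CT3, a violation of CT1 in row [i] or [j]. *)
Lemma CT_col_distinct i j c : i < j -> j < size a -> c < nth 0 a i -> c < nth 0 a j ->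
  ent T i c != ent T j c.
Proof.
move=> Hij Hj Hci Hcj; apply/eqP => E.
have Hi : i < size a := ltn_trans Hij Hj.
case: c Hci Hcj E => [|c] Hci Hcj E; first by move: (CT_first_col Hij Hj); rewrite E ltnn.
have := CT_triple Hij Hj Hci Hcj; case: ifP => Hle /=; rewrite E ltnn /= => H.
  by have := CT_row_dec Hi (leqnSn c) Hci; rewrite E leqNgt H.
have Hc2 : c.+2 < nth 0 a j by move/negbT: Hle; rewrite -ltnNge; apply: leq_ltn_trans.
by have := CT_row_dec Hj (leqnSn c.+1) Hc2; rewrite leqNgt H.
Qed.

Lemma CT_weak_tableau b : (forall v, count_mem v (entries T) = nth 0 b v) ->
  weak_tableau (map (map val) T) a b.
Proof.
move=> Hc; split.
- by rewrite -map_comp -Hsh; apply: eq_map => r /=; rewrite size_map.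
- by move=> i c c' Hi Hcc Hc'; rewrite -!ent_entry; apply: CT_row_dec.
- by move=> i j Hij Hj; rewrite -!ent_entry; apply: CT_first_col.
- by move=> i j c Hij Hj Hci Hcj; rewrite -!ent_entry; apply: CT_col_distinct.
- by move=> v; rewrite -Hc /entries map_flatten.
Qed.

End CompositionTableau.
End Fillings.

Section MonomialQuasisymmetric.
Variable n : nat.
Local Open Scope nat_scope.

Definition ord_lt : rel 'I_n := fun x y => (x < y)%N.
Definition mnm_supp (m : 'X_{1..n}) : seq 'I_n := [seq i <- enum 'I_n | m i != 0].
Definition seq_of_mnm (m : 'X_{1..n}) : seq nat := map (fun i => m i) (mnm_supp m).
Definition mnm_at (t : seq 'I_n) (a : seq nat) : 'X_{1..n} :=
  (\sum_(p <- zip t a) U_(p.1) *+ p.2)%MM.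
Definition mnm_of_seq (b : seq nat) : 'X_{1..n} := [multinom nth 0 b i | i < n].

Lemma ord_lt_trans : transitive ord_lt.
Proof. by move=> y x z; apply: ltn_trans. Qed.

Lemma ord_lt_irr : irreflexive ord_lt.
Proof. by move=> x; apply: ltnn. Qed.

Lemma sorted_ord_lt_uniq (t : seq 'I_n) : sorted ord_lt t -> uniq t.
Proof. exact: (sorted_uniq ord_lt_trans ord_lt_irr). Qed.

Lemma sorted_enum_ord_lt : sorted ord_lt (enum 'I_n).
Proof. by have := iota_ltn_sorted 0 n; rewrite -val_enum_ord sorted_map. Qed.

Lemma mnm_supp_sorted m : sorted ord_lt (mnm_supp m).
Proof. apply: sorted_filter; [exact: ord_lt_trans|exact: sorted_enum_ord_lt]. Qed.

Lemma mnm_supp_uniq m : uniq (mnm_supp m).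
Proof. exact/sorted_ord_lt_uniq/mnm_supp_sorted. Qed.

Lemma mem_mnm_supp m i : (i \in mnm_supp m) = (m i != 0).
Proof. by rewrite mem_filter mem_enum andbT. Qed.

Lemma size_mnm_supp m : size (mnm_supp m) <= n.
Proof. by rewrite size_filter; apply: leq_trans (count_size _ _) _; rewrite size_enum_ord. Qed.

Lemma size_seq_of_mnm m : size (seq_of_mnm m) = size (mnm_supp m).
Proof. by rewrite size_map. Qed.

Lemma seq_of_mnm_comp m : is_comp (seq_of_mnm m).
Proof. by rewrite /is_comp all_map; apply/allP => i; rewrite mem_mnm_supp /= lt0n. Qed.

Lemma mnm_at_cons x t k a : mnm_at (x :: t) (k :: a) = (U_(x) *+ k + mnm_at t a)%MM.
Proof. by rewrite /mnm_at /= big_cons. Qed.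

Lemma mnm_atE t a i : uniq t -> size t = size a ->
  mnm_at t a i = if i \in t then nth 0 a (index i t) else 0.
Proof.
elim: t a => [|x t IH] [|k a] //=.
  by move=> _ _; rewrite /mnm_at big_nil mnm0E.
move=> /andP[Hx Hu] [Hs]; rewrite mnm_at_cons mnmDE mulmnE mnm1E IH // in_cons.
case: (eqVneq i x) => [->|Hne] /=; first by rewrite (negbTE Hx) mul1n addn0.
by rewrite mul0n add0n.
Qed.

Lemma mnm_supp_at t a : sorted ord_lt t -> size t = size a -> is_comp a ->
  mnm_supp (mnm_at t a) = t.
Proof.
move=> Hs Hsz Ha; have Hu := sorted_ord_lt_uniq Hs.
apply: (irr_sorted_eq_in (leT := ord_lt)).
- by move=> x y z _ _ _; apply: ord_lt_trans.
- by move=> x _; apply: ord_lt_irr.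
- exact: mnm_supp_sorted.
- exact: Hs.
move=> i; rewrite mem_mnm_supp mnm_atE //; case: ifP => Hi //=.
  rewrite -lt0n; apply: (all_nthP 0 Ha); rewrite -Hsz index_mem //.
Qed.

Lemma map_index_nth (t : seq 'I_n) a : uniq t -> size t = size a ->
  map (fun i => nth 0 a (index i t)) t = a.
Proof.
elim: t a => [|x t IH] [|k a] //= /andP[Hx Hu] [Hs].
rewrite eqxx; congr (_ :: _).
transitivity (map (fun i => nth 0 a (index i t)) t); last exact: IH.
apply/eq_in_map => y Hy /=.
by case: eqP => // E; move: Hx; rewrite E Hy.
Qed.

Lemma seq_of_mnm_at t a : sorted ord_lt t -> size t = size a -> is_comp a ->
  seq_of_mnm (mnm_at t a) = a.
Proof.
move=> Hs Hsz Ha; have Hu := sorted_ord_lt_uniq Hs.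
rewrite /seq_of_mnm mnm_supp_at // -{2}(map_index_nth Hu Hsz).
by apply/eq_in_map => i Hi; rewrite mnm_atE // Hi.
Qed.

Lemma mnm_at_supp m : mnm_at (mnm_supp m) (seq_of_mnm m) = m.
Proof.
apply/mnmP => i; rewrite mnm_atE ?mnm_supp_uniq ?size_seq_of_mnm //.
case: ifP => Hi; last by move: Hi; rewrite mem_mnm_supp => /negbT; rewrite negbK => /eqP.
by rewrite /seq_of_mnm (nth_map i) ?index_mem // nth_index.
Qed.

Local Open Scope ring_scope.

Lemma Mmon_mnm_at a :
  Mmon n a = \sum_(t : (size a).-tuple 'I_n | sorted ord_lt t) 'X_[mnm_at t a].
Proof. by apply: eq_bigr => t _; rewrite mprodXnE. Qed.

Lemma Mmon_coef a m : is_comp a -> (Mmon n a)@_m = (seq_of_mnm m == a)%:R.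
Proof.
move=> Ha; rewrite Mmon_mnm_at raddf_sum /=.
under eq_bigr do rewrite mcoeffX.
rewrite -natr_sum; congr (_ %:R).
case: (eqVneq (seq_of_mnm m) a) => Hfa /=.
  have Hsz : size (mnm_supp m) == size a by rewrite -size_seq_of_mnm Hfa.
  pose t0 : (size a).-tuple 'I_n := Tuple Hsz.
  rewrite (bigD1 t0) /=; last exact: mnm_supp_sorted.
  have E0 : mnm_at (mnm_supp m) a = m by rewrite -Hfa mnm_at_supp.
  rewrite /= E0 eqxx big1 // => t /andP[Hst Hne].
  case: eqP => // E; move: Hne.
  have Et : val t = mnm_supp m by rewrite -E mnm_supp_at // size_tuple.
  have -> : t = t0 by apply: val_inj.
  by rewrite eqxx.
rewrite big1 // => t Hst; case: eqP => // E; move: Hfa.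
by rewrite -E seq_of_mnm_at ?size_tuple // eqxx.
Qed.

Local Close Scope ring_scope.

Lemma seq_of_mnm_of_seq b : is_comp b -> size b <= n -> seq_of_mnm (mnm_of_seq b) = b.
Proof.
move=> Hb Hbn.
have E1 : map val (mnm_supp (mnm_of_seq b)) = iota 0 (size b).
  rewrite /mnm_supp (eq_filter (a2 := preim val (fun v => nth 0 b v != 0))); last first.
    by move=> i /=; rewrite mnmE.
  rewrite -filter_map val_enum_ord -(subnKC Hbn) iotaD filter_cat add0n.
  rewrite (eq_in_filter (a1 := fun v => nth 0 b v != 0) (a2 := predT)); last first.
    by move=> v; rewrite mem_iota add0n => /andP[_ Hv] /=; rewrite -lt0n; apply: (all_nthP 0 Hb).
  rewrite filter_predT (eq_in_filter (a2 := pred0)) ?filter_pred0 ?cats0 //.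
  by move=> v; rewrite mem_iota => /andP[Hv _] /=; rewrite nth_default.
rewrite /seq_of_mnm (eq_map (g := fun i : 'I_n => nth 0 b (val i))); last by move=> i; rewrite mnmE.
by rewrite (map_comp (nth 0 b) val) E1 map_nth_iota0 // take_size.
Qed.

End MonomialQuasisymmetric.

Section Kostka.
Variable n : nat.
Local Open Scope ring_scope.

Lemma QS_coef a m :
  (QS n a)@_m = (count (fun T => is_CT a T && (content T == m)) (fillings n a))%:R.
Proof.
rewrite /QS raddf_sum /=; under eq_bigr do rewrite monoT_content mcoeffX.
rewrite -natr_sum -big_filter (sum_nat_count (fun T => content T == m)) count_filter.
by congr _%:R; apply: eq_count => T /=; rewrite andbC.
Qed.

Definition kostka (g b : seq nat) : nat :=
  count (fun T => is_CT g T && (content T == mnm_of_seq n b)) (fillings n g).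

Lemma QS_coef_kostka g b : (QS n g)@_(mnm_of_seq n b) = (kostka g b)%:R.
Proof. exact: QS_coef. Qed.

Local Close Scope ring_scope.
Local Open Scope nat_scope.

Lemma count_entries_content (T : seq (seq 'I_n)) b : size b <= n ->
  content T = mnm_of_seq n b -> forall v, count_mem v (entries T) = nth 0 b v.
Proof.
move=> Hb E v; case: (ltnP v n) => Hv.
  by have := congr1 (fun m : 'X_{1..n} => m (Ordinal Hv)) E; rewrite /= !mnmE.
rewrite nth_default ?(leq_trans Hb Hv) //; apply/count_memPn/negP => /mapP[x _ Ex].
by move: (ltn_ord x); rewrite -Ex ltnNge Hv.
Qed.

Lemma kostka_triangular g b : is_comp g -> is_comp b -> size b <= n ->
  kostka g b != 0 -> b = g \/ revlex_gt g b.
Proof.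
move=> Hg Hb Hbn; rewrite -lt0n -has_count => /hasP[T].
rewrite mem_fillings => /eqP Hsh /andP[HCT /eqP Hc].
exact: (weak_tableau_revlex Hg Hb (CT_weak_tableau Hsh HCT (count_entries_content Hbn Hc))).
Qed.

Section RowIndexTableau.
Variables (g : seq nat) (x0 : 'I_n).
Hypotheses (Hg : is_comp g) (Hgn : size g <= n).

Definition row_index_tableau : seq (seq 'I_n) :=
  map (fun i => nseq (nth 0 g i) (insubd x0 i)) (iota 0 (size g)).

Lemma row_index_tableau_shape : map size row_index_tableau = g.
Proof.
rewrite -map_comp (eq_map (g := nth 0 g)) ?map_nth_iota0 ?take_size //.
by move=> i /=; rewrite size_nseq.
Qed.

Lemma row_index_tableau_row i : i < size g ->
  nth [::] row_index_tableau i = nseq (nth 0 g i) (insubd x0 i).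
Proof. by move=> Hi; rewrite (nth_map 0) ?size_iota // nth_iota. Qed.

Lemma row_index_tableau_ent i c : cell g i c -> ent row_index_tableau i c = i.
Proof.
move=> Hc; rewrite (ent_cell x0 row_index_tableau_shape Hc); case/andP: Hc => Hi Hc.
by rewrite row_index_tableau_row // nth_nseq Hc val_insubd (leq_trans Hi Hgn).
Qed.

Lemma row_index_tableau_CT : is_CT g row_index_tableau.
Proof.
have Hpos i : i < size g -> 0 < nth 0 g i by apply: (all_nthP 0 Hg).
apply/andP; split; first (apply/andP; split).
- apply/allP => r /mapP[i _ ->].
  by elim: (nth 0 g i) => [|[|k] IH] //=; rewrite leqnn.
- apply/allP => i; rewrite mem_iota => /andP[_ Hi].
  apply/allP => j; rewrite mem_iota => /andP[_ Hj]; apply/implyP => Hij.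
  by rewrite !row_index_tableau_ent // /cell ?Hi ?Hj Hpos.
- apply/allP => i; rewrite mem_iota => /andP[_ Hi].
  apply/allP => j; rewrite mem_iota => /andP[_ Hj].
  apply/allP => k; rewrite mem_iota => /andP[_ Hk].
  apply/implyP => /and3P[Hij Hki Hkj].
  have Ci : cell g i k by rewrite /cell Hi.
  have Cj : cell g j k by rewrite /cell Hj.
  rewrite (row_index_tableau_ent Ci) (row_index_tableau_ent Cj); case: ifP => Hle.
    apply/implyP => Hk0; rewrite (@row_index_tableau_ent i k.-1) ?Hij ?orbT // /cell Hi.
    exact: leq_ltn_trans (leq_pred k) Hki.
  rewrite (@row_index_tableau_ent j k.+1) ?Hij ?orbT // /cell Hj /=.
  by move/negbT: Hle; rewrite -ltnNge; apply: leq_ltn_trans Hki.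
Qed.

Lemma row_index_tableau_content : content row_index_tableau = mnm_of_seq n g.
Proof.
apply/mnmP => i; rewrite !mnmE /entries map_flatten.
rewrite (count_cells _ (R := map (map val) row_index_tableau) (g := g)); last first.
  by rewrite -map_comp -row_index_tableau_shape; apply: eq_map => r /=; rewrite size_map.
rewrite (eq_big_nat _ _ (F2 := fun j => (j == val i) * nth 0 g j)); last first.
  move=> j /andP[_ Hj]; rewrite (eq_big_nat _ _ (F2 := fun=> (j == val i) : nat)).
    by rewrite sum_nat_const_nat subn0 mulnC.
  by move=> c /andP[_ Hc]; rewrite -ent_entry row_index_tableau_ent // /cell Hj.
case: (ltnP (val i) (size g)) => Hi.
  rewrite (bigD1_seq (val i)) ?mem_index_iota ?iota_uniq //= eqxx mul1n big1 ?addn0 //.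
  by move=> j /negbTE ->.
by rewrite nth_default // big_nat_cond big1 // => j /andP[/andP[_ Hj] _]; case: eqP; lia.
Qed.

Lemma row_index_tableau_unique T : T \in fillings n g -> is_CT g T ->
  content T = mnm_of_seq n g -> T = row_index_tableau.
Proof.
rewrite mem_fillings => /eqP Hsh HCT Hc.
have HW := CT_weak_tableau Hsh HCT (count_entries_content Hgn Hc).
have HszT : size T = size g by rewrite -Hsh size_map.
apply: (eq_from_nth (x0 := [::])) => [|i Hi].
  by rewrite HszT -row_index_tableau_shape size_map.
rewrite HszT in Hi.
have Hs : size (nth [::] T i) = nth 0 g i by rewrite -Hsh (nth_map [::]) // HszT.
apply: (eq_from_nth (x0 := x0)) => [|c]; first by rewrite Hs row_index_tableau_row ?size_nseq.
rewrite Hs => Hci; have Ce : cell g i c by rewrite /cell Hi.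
apply: val_inj; rewrite -(ent_cell x0 Hsh Ce) -(ent_cell x0 row_index_tableau_shape Ce).
by rewrite row_index_tableau_ent // ent_entry (weak_tableau_diag Hg Hg HW).
Qed.

Lemma kostka_diag : kostka g g = 1.
Proof.
rewrite /kostka (eq_in_count (a2 := pred1 row_index_tableau)).
  by rewrite count_uniq_mem ?uniq_fillings // mem_fillings row_index_tableau_shape eqxx.
move=> T HT /=; apply/andP/eqP => [[H1 /eqP H2]|->]; first exact: row_index_tableau_unique.
by rewrite row_index_tableau_CT row_index_tableau_content.
Qed.

End RowIndexTableau.
End Kostka.

Section Quasisymmetry.
Local Open Scope nat_scope.

Variable n : nat.
Variable x0 : 'I_n.

Lemma is_CT_relabel a (T : seq (seq 'I_n)) (f : 'I_n -> 'I_n) : is_comp a -> map size T = a ->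
  {in flatten T &, forall x y, (f x < f y) = (x < y)} ->
  is_CT a (map (map f) T) = is_CT a T.
Proof.
move=> Ha Hsh Hf.
have Hsh' : map size (map (map f) T) = a.
  by rewrite -Hsh -map_comp; apply: eq_map => r /=; rewrite size_map.
have Hcell : forall i k, cell a i k ->
    ent (map (map f) T) i k = val (f (nth x0 (nth [::] T i) k)).
  move=> i k Hc; rewrite (ent_cell x0 Hsh' Hc); case/andP: Hc => Hi Hk.
  rewrite -Hsh size_map in Hi; rewrite -Hsh (nth_map [::]) // in Hk.
  by rewrite (nth_map [::]) // (nth_map x0).
have Hcmp : forall i k j l, cell a i k -> cell a j l ->
    (ent (map (map f) T) i k < ent (map (map f) T) j l) = (ent T i k < ent T j l).
  move=> i k j l Hc1 Hc2; rewrite !Hcell // (ent_cell x0 Hsh Hc1) (ent_cell x0 Hsh Hc2).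
  by apply: Hf; apply: cell_mem_flatten Hsh _.
have Hpos : forall i, i < size a -> 0 < nth 0 a i.
  by move=> i Hi; apply: (all_nthP 0 Ha).
rewrite /is_CT; congr (_ && _ && _).
- rewrite all_map; apply: eq_in_all => r Hr /=; rewrite sorted_map.
  apply: (eq_in_sorted (P := mem r)); last by apply/allP.
  move=> x y Hx Hy /=; rewrite leqNgt [RHS]leqNgt Hf //;
  by apply/flattenP; exists r.
- apply: eq_in_all => i; rewrite mem_iota add0n => /andP[_ Hi].
  apply: eq_in_all => j; rewrite mem_iota add0n => /andP[_ Hj].
  by rewrite Hcmp // /cell ?Hi ?Hj Hpos.
- apply: eq_in_all => i; rewrite mem_iota add0n => /andP[_ Hi].
  apply: eq_in_all => j; rewrite mem_iota add0n => /andP[_ Hj].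
  apply: eq_in_all => k; rewrite mem_iota add0n => /andP[_ Hk].
  case Hg: [&& i < j, k < nth 0 a i & k < nth 0 a j] => //=.
  move/and3P: Hg => [Hij Hki Hkj].
  have Ci : cell a i k by rewrite /cell Hi.
  have Cj : cell a j k by rewrite /cell Hj.
  rewrite (Hcmp j k i k) //.
  case: ifP => Hle.
    have Ci' : cell a i k.-1 by rewrite /cell Hi; apply: leq_ltn_trans (leq_pred k) Hki.
    by rewrite (Hcmp i k.-1 j k).
  have Cj' : cell a j k.+1.
    by rewrite /cell Hj; move/negbT: Hle; rewrite -ltnNge; apply: leq_ltn_trans Hki.
  by rewrite (Hcmp i k j k.+1).
Qed.

Lemma sorted_index_lt (S : seq 'I_n) x y : sorted (@ord_lt n) S -> x \in S -> y \in S ->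
  (index x S < index y S) = (x < y).
Proof.
move=> Hs Hx Hy.
have Hu := sorted_ord_lt_uniq Hs.
have Hix : index x S < size S by rewrite index_mem.
have Hiy : index y S < size S by rewrite index_mem.
have Hn := sorted_ltn_nth (@ord_lt_trans n) x0 Hs.
case: (ltngtP (index x S) (index y S)) => H.
- by have := Hn _ _ Hix Hiy H; rewrite /ord_lt !nth_index.
- have := Hn _ _ Hiy Hix H; rewrite /ord_lt !nth_index // => Hyx.
  by apply/esym/negbTE; rewrite -leqNgt ltnW.
- by move: (congr1 (nth x0 S) H); rewrite !nth_index // => ->; rewrite ltnn.
Qed.

Lemma count_CT_relabel_leq g m1 m2 (D : pred 'I_n) (f f' : 'I_n -> 'I_n) : is_comp g ->
  {in D &, forall x y, (f x < f y) = (x < y)} -> {in D, cancel f f'} ->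
  (forall T, content T = m1 -> {subset flatten T <= D} /\ content (map (map f) T) = m2) ->
  count (fun T => is_CT g T && (content T == m1)) (fillings n g) <=
  count (fun T => is_CT g T && (content T == m2)) (fillings n g).
Proof.
move=> Hg Hmono Hcan Hdom.
apply: (count_leq_cancel_in (f := map (map f)) (g := map (map f'))); first exact: uniq_fillings.
- move=> T; rewrite mem_fillings => /eqP Hsh /andP[HCT /eqP /Hdom[HD Hc]].
  rewrite mem_fillings Hc eqxx andbT is_CT_relabel ?HCT ?andbT //.
    by rewrite -Hsh -map_comp; apply/eqP/eq_map => r /=; rewrite size_map.
  by move=> x y Hx Hy; apply: Hmono; apply: HD.
- move=> T _ /andP[_ /eqP /Hdom[HD _]].
  rewrite -map_comp -[RHS]map_id; apply/eq_in_map => r Hr /=.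
  rewrite -map_comp -[RHS]map_id; apply/eq_in_map => x Hx /=.
  by apply: Hcan; apply: HD; apply/flattenP; exists r.
Qed.

(* [compress] renames the variables occurring in [m] to [x_1, ..., x_k] in order. *)
Section Relabel.
Variable m : 'X_{1..n}.
Let S := mnm_supp m.
Let k := size S.

Definition compress (x : 'I_n) : 'I_n := insubd x (index x S).
Definition expand (j : 'I_n) : 'I_n := nth j S j.


Lemma val_compress x : x \in S -> val (compress x) = index x S.
Proof.
move=> Hx; rewrite val_insubd; case: ifP => // /negbT; rewrite -leqNgt => H.
by have := leq_trans (size_mnm_supp m) H; rewrite leqNgt index_mem Hx.
Qed.

Lemma expand_mem j : val j < k -> expand j \in S.
Proof. by move=> Hj; apply: mem_nth. Qed.

Lemma index_expand j : val j < k -> index (expand j) S = val j.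
Proof. by move=> Hj; rewrite /expand index_uniq // mnm_supp_uniq. Qed.

Lemma expand_compress x : x \in S -> expand (compress x) = x.
Proof. by move=> Hx; rewrite /expand val_compress // nth_index. Qed.

Lemma compress_expand j : val j < k -> compress (expand j) = j.
Proof. by move=> Hj; apply: val_inj; rewrite val_compress ?expand_mem // index_expand. Qed.

Lemma compress_lt x y : x \in S -> y \in S -> (compress x < compress y) = (x < y).
Proof. by move=> Hx Hy; rewrite !val_compress // (sorted_index_lt (mnm_supp_sorted m)). Qed.

Lemma expand_lt x y : val x < k -> val y < k -> (expand x < expand y) = (x < y).
Proof.
move=> Hx Hy; rewrite -(sorted_index_lt (mnm_supp_sorted m)) ?expand_mem //.
by rewrite !index_expand.
Qed.

Lemma entries_mem_supp (T : seq (seq 'I_n)) :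
  content T = m -> forall x, x \in flatten T -> x \in S.
Proof.
move=> Hc x Hx; rewrite mem_mnm_supp -Hc content_flatten -lt0n -has_count has_pred1 //.
Qed.

Lemma entries_lt_supp (T : seq (seq 'I_n)) : content T = mnm_of_seq n (seq_of_mnm m) ->
  forall x, x \in flatten T -> val x < k.
Proof.
move=> Hc x Hx.
have : 0 < content T x by rewrite content_flatten -has_count has_pred1.
rewrite Hc mnmE => H0; case: (ltnP (val x) k) => // H.
by move: H0; rewrite nth_default // size_seq_of_mnm.
Qed.

Lemma content_compress (T : seq (seq 'I_n)) :
  content T = m -> content (map (map compress) T) = mnm_of_seq n (seq_of_mnm m).
Proof.
move=> Hc; have HS := entries_mem_supp Hc.
apply/mnmP => j; rewrite !mnmE count_entries -map_flatten count_map.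
rewrite (eq_in_count (a2 := fun x => index x S == val j)); last first.
  by move=> x Hx /=; rewrite -val_eqE val_compress // HS.
case: (ltnP (val j) k) => Hj.
  rewrite (eq_in_count (a2 := pred1 (nth x0 S j))); last first.
    move=> x Hx /=; apply/eqP/eqP => [<-|->]; first by rewrite nth_index // HS.
    by rewrite index_uniq // mnm_supp_uniq.
  by rewrite -content_flatten Hc /seq_of_mnm (nth_map x0).
rewrite nth_default ?size_seq_of_mnm //.
apply/eqP; rewrite -leqn0 leqNgt -has_count; apply/hasP => [[x Hx /eqP E]].
by move: (HS x Hx); rewrite -index_mem E ltnNge Hj.
Qed.

Lemma content_expand (T : seq (seq 'I_n)) :
  content T = mnm_of_seq n (seq_of_mnm m) -> content (map (map expand) T) = m.
Proof.
move=> Hc; have Hk := entries_lt_supp Hc.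
apply/mnmP => i; rewrite !mnmE count_entries -map_flatten count_map.
case HiS: (i \in S).
  rewrite (eq_in_count (a2 := fun x : 'I_n => val x == index i S)); last first.
    move=> x Hx /=; apply/eqP/eqP => [<-|E]; first by rewrite index_expand // Hk.
    by rewrite /expand E nth_index.
  have Hidx : index i S < n by apply: leq_trans (size_mnm_supp m); rewrite index_mem.
  have := esym (content_flatten T (Ordinal Hidx)); rewrite Hc mnmE /= => E.
  rewrite (eq_count (a2 := pred1 (Ordinal Hidx))); last by move=> x /=; rewrite -val_eqE.
  rewrite E.
  by rewrite /seq_of_mnm (nth_map i) ?index_mem // nth_index.
rewrite (eq_in_count (a2 := pred0)); last first.
  move=> x Hx /=; apply/negbTE/eqP => E.
  by move: (expand_mem (Hk x Hx)); rewrite E HiS.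
rewrite count_pred0; apply/esym/eqP; move/negbT: HiS; by rewrite mem_mnm_supp negbK.
Qed.

Lemma count_CT_content_compress g : is_comp g ->
  count (fun T => is_CT g T && (content T == m)) (fillings n g) =
  count (fun T => is_CT g T && (content T == mnm_of_seq n (seq_of_mnm m))) (fillings n g).
Proof.
move=> Hg; apply/eqP; rewrite eqn_leq.
rewrite (@count_CT_relabel_leq _ _ _ [pred x | x \in S] compress expand) //=; last first.
- by move=> T Hc; split; [apply: entries_mem_supp | apply: content_compress].
- exact: expand_compress.
- exact: compress_lt.
rewrite (@count_CT_relabel_leq _ _ _ [pred j | val j < k] expand compress) //=.
- exact: expand_lt.
- exact: compress_expand.
- by move=> T Hc; split; [apply: entries_lt_supp | apply: content_expand].
Qed.

End Relabel.

Local Open Scope ring_scope.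
Lemma QS_coef_compress g m : is_comp g ->
  (QS n g)@_m = (QS n g)@_(mnm_of_seq n (seq_of_mnm m)).
Proof. by move=> Hg; rewrite !QS_coef count_CT_content_compress. Qed.

End Quasisymmetry.

Section Expansion.
Variable n : nat.
Local Open Scope ring_scope.

Definition QS_expandable (f : {mpoly rat[n]}) := exists s c, QS_expansion f s c.

Lemma QS_expandable0 : QS_expandable 0.
Proof. by exists [::], (fun=> 0); split=> [||g|]; rewrite ?eqxx ?big_nil. Qed.

Lemma QS_expandable_QS g : is_comp g -> (size g <= n)%N -> QS_expandable (QS n g).
Proof.
move=> Hg Hgn; exists [:: g], (fun h => (h == g)%:R); split=> //.
- by move=> h; rewrite inE => /eqP ->; split.
- by move=> h; rewrite inE; case: (h =P g); rewrite ?eqxx.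
- by rewrite big_seq1 eqxx scale1r.
Qed.

Lemma QS_expandableZ r f : QS_expandable f -> QS_expandable (r *: f).
Proof.
move=> [s [c [Hu Hs Hc Hf]]]; exists s, (fun g => r * c g); split=> //.
- by move=> g Hg; apply: Hc; apply: contraNneq Hg => ->; rewrite mulr0.
- by rewrite Hf scaler_sumr; apply: eq_bigr => g _; rewrite scalerA.
Qed.

Lemma big_scale_support (s s' : seq (seq nat)) (c : seq nat -> rat)
    (F : seq nat -> {mpoly rat[n]}) :
  uniq s -> uniq s' -> {subset s <= s'} -> (forall g, c g != 0 -> g \in s) ->
  \sum_(g <- s') c g *: F g = \sum_(g <- s) c g *: F g.
Proof.
move=> Hu Hu' Hsub Hc; rewrite (bigID (mem s)) /= [X in _ + X]big1 ?addr0; last first.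
  by move=> g Hg; case: (eqVneq (c g) 0) => [->|/Hc]; rewrite ?scale0r // (negbTE Hg).
rewrite -big_filter; apply/perm_big/uniq_perm; rewrite ?filter_uniq // => g.
by rewrite mem_filter andb_idr // => /Hsub.
Qed.

Lemma QS_expandableD f1 f2 : QS_expandable f1 -> QS_expandable f2 -> QS_expandable (f1 + f2).
Proof.
move=> [s1 [c1 [Hu1 Hs1 Hc1 Hf1]]] [s2 [c2 [Hu2 Hs2 Hc2 Hf2]]].
have Sub1 : {subset s1 <= undup (s1 ++ s2)} by move=> g Hg; rewrite mem_undup mem_cat Hg.
have Sub2 : {subset s2 <= undup (s1 ++ s2)}.
  by move=> g Hg; rewrite mem_undup mem_cat Hg orbT.
exists (undup (s1 ++ s2)), (fun g => c1 g + c2 g); split.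
- exact: undup_uniq.
- by move=> g; rewrite mem_undup mem_cat => /orP[/Hs1|/Hs2].
- move=> g Hg; case: (eqVneq (c1 g) 0) => [H1|/Hc1/Sub1//].
  by apply: Sub2; apply: Hc2; move: Hg; rewrite H1 add0r.
- under eq_bigr do rewrite scalerDl.
  by rewrite big_split /= Hf1 Hf2 (big_scale_support _ Hu1 _ Sub1 Hc1)
     ?(big_scale_support _ Hu2 _ Sub2 Hc2) ?undup_uniq.
Qed.

Lemma QS_expandable_sum (I : eqType) (r : seq I) (F : I -> {mpoly rat[n]}) :
  (forall i, i \in r -> QS_expandable (F i)) -> QS_expandable (\sum_(i <- r) F i).
Proof.
elim: r => [|i r IH] H; first by rewrite big_nil; apply: QS_expandable0.
rewrite big_cons; apply: QS_expandableD; first by apply: H; rewrite inE eqxx.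
by apply: IH => j Hj; apply: H; rewrite inE Hj orbT.
Qed.

Lemma QS_expandableB f1 f2 : QS_expandable f1 -> QS_expandable f2 -> QS_expandable (f1 - f2).
Proof. by move=> H1 H2; rewrite -scaleN1r; apply: QS_expandableD => //; apply: QS_expandableZ. Qed.

Variable x0 : 'I_n.

Definition QS_support (g : seq nat) := undup [seq seq_of_mnm m | m <- msupp (QS n g)].

Lemma QS_support_comp g b : b \in QS_support g -> is_comp b /\ (size b <= n)%N.
Proof.
rewrite mem_undup => /mapP[m _ ->]; split; first exact: seq_of_mnm_comp.
by rewrite size_seq_of_mnm size_mnm_supp.
Qed.

Lemma QS_Mmon_expansion g : is_comp g ->
  QS n g = \sum_(b <- QS_support g) (kostka n g b)%:R *: Mmon n b.
Proof.
move=> Hg; apply/mpolyP => m; rewrite [RHS]raddf_sum /=.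
rewrite big_seq (eq_bigr (fun b => (kostka n g b)%:R * (seq_of_mnm m == b)%:R)); last first.
  by move=> b /QS_support_comp[Hb _]; rewrite mcoeffZ Mmon_coef.
rewrite -big_seq (QS_coef_compress x0) // QS_coef_kostka.
case: (boolP (seq_of_mnm m \in QS_support g)) => Hin.
  rewrite (bigD1_seq (seq_of_mnm m)) ?undup_uniq //= eqxx mulr1 big1 ?addr0 //.
  by move=> b Hb; rewrite eq_sym (negbTE Hb) mulr0.
rewrite big_seq big1; last first.
  by move=> b Hb; case: eqP => [E|]; [move: Hin; rewrite E Hb | rewrite mulr0].
rewrite -QS_coef_kostka -(QS_coef_compress x0) //; apply/eqP; rewrite mcoeff_eq0.
by apply: contra Hin => Hm; rewrite mem_undup map_f.
Qed.

(* Induction along revlex: [M_a] is [S_a] minus a combination of [M_b] with [a] above [b]. *)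
Lemma Mmon_expandable N a : (revlex_rank (sumn a) a < N)%N -> is_comp a -> (size a <= n)%N ->
  QS_expandable (Mmon n a).
Proof.
elim: N a => [|N IH] a // HN Ha Han.
have Hdec := QS_Mmon_expansion Ha; have HK := kostka_diag x0 Ha Han.
have Hain : a \in QS_support a.
  rewrite mem_undup; apply/mapP; exists (mnm_of_seq n a); last by rewrite seq_of_mnm_of_seq.
  by rewrite mcoeff_msupp QS_coef_kostka HK oner_eq0.
rewrite (bigD1_seq a) ?undup_uniq //= HK scale1r in Hdec.
have -> : Mmon n a = QS n a - \sum_(b <- QS_support a | b != a) (kostka n a b)%:R *: Mmon n b.
  by rewrite Hdec addrK.
apply: QS_expandableB; first exact: QS_expandable_QS.
rewrite -big_filter; apply: QS_expandable_sum => b; rewrite mem_filter => /andP[Hne Hb].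
have [Hbc Hbn] := QS_support_comp Hb.
case: (eqVneq (kostka n a b) 0%N) => [->|HK0]; first by rewrite scale0r; apply: QS_expandable0.
apply/QS_expandableZ/IH => //.
case: (kostka_triangular Ha Hbc Hbn HK0) => [E|Hab]; first by rewrite E eqxx in Hne.
by case: (Hab) => Hs _; rewrite -Hs; exact: leq_trans (revlex_rank_lt Ha Hbc Hab) HN.
Qed.

Lemma QS_expansion_coef f s c b : QS_expansion f s c ->
  f@_(mnm_of_seq n b) = \sum_(g <- s) c g * (kostka n g b)%:R.
Proof.
by case=> _ _ _ ->; rewrite raddf_sum /=; apply: eq_bigr => g _; rewrite mcoeffZ QS_coef_kostka.
Qed.

(* Unitriangularity of [kostka]: at a composition [b] with no nonzero coefficient
   strictly above it, the coefficient of [x^b] is the coefficient of [S_b]. *)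
Lemma QS_expansion_coef_top f s c b : QS_expansion f s c -> is_comp b -> (size b <= n)%N ->
  (forall g, c g != 0 -> ~ revlex_gt g b) -> f@_(mnm_of_seq n b) = c b.
Proof.
move=> Hexp Hb Hbn Htop; have [Hu Hs Hc _] := Hexp.
have Hterm g : g \in s -> c g * (kostka n g b)%:R = if g == b then c g else 0.
  move=> Hg; case: eqP => [->|Hne]; first by rewrite kostka_diag // mulr1.
  case: (eqVneq (c g) 0) => [->|Hcg]; first by rewrite mul0r.
  have [Hgc _] := Hs g Hg.
  case: (eqVneq (kostka n g b) 0%N) => [->|HK]; first by rewrite mulr0.
  by case: (kostka_triangular Hgc Hb Hbn HK) => [/esym|/(Htop g Hcg)].
rewrite (QS_expansion_coef _ Hexp) big_seq (eq_bigr _ Hterm) -big_seq.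
case: (boolP (b \in s)) => Hbs.
  by rewrite -big_mkcond -big_filter filter_pred1_uniq // big_seq1.
rewrite big_seq big1; last by move=> g Hg; case: eqP Hg => [-> |//]; rewrite (negbTE Hbs).
by apply/esym/eqP; apply: contraNT Hbs => /Hc.
Qed.

Lemma Mmon_expansion_triangular a s c : is_comp a -> (size a <= n)%N ->
  QS_expansion (Mmon n a) s c -> c a = 1 /\ (forall g, revlex_gt g a -> c g = 0).
Proof.
move=> Ha Han Hexp; have [_ Hs Hc _] := Hexp.
set rank := revlex_rank (sumn a).
have Mcoef b : is_comp b -> (size b <= n)%N -> (Mmon n a)@_(mnm_of_seq n b) = (b == a)%:R.
  by move=> Hb Hbn; rewrite Mmon_coef // seq_of_mnm_of_seq.
have Habove g : c g != 0 -> revlex_gt g a ->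
    [&& c g != 0, sumn g == sumn a & (rank a < rank g)%N].
  move=> Hcg [Hsg H]; have [Hgc _] := Hs g (Hc g Hcg).
  by rewrite Hcg Hsg eqxx /rank -Hsg (revlex_rank_lt Hgc Ha (conj Hsg H)).
(* A nonzero coefficient above [a] of maximal rank would sit at a monomial absent from [M_a]. *)
have Hzero g : revlex_gt g a -> c g = 0.
  move=> Hga; apply/eqP; apply: contraT => Hcg.
  have : has (fun g => [&& c g != 0, (sumn g == sumn a)%N & (rank a < rank g)%N]) s.
    by apply/hasP; exists g; [apply: Hc | apply: Habove].
  case/(seq_argmax rank) => g0 /and4P[Hg0 Hc0 /eqP Hd0 Hr0] Hmax.
  have [Hg0c Hg0n] := Hs g0 Hg0.
  have Hg0a : g0 != a by apply: contraTneq Hr0 => ->; rewrite ltnn.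
  suff : (Mmon n a)@_(mnm_of_seq n g0) = c g0.
    by rewrite Mcoef // (negbTE Hg0a) /= => E; move: Hc0; rewrite -E eqxx.
  apply: (QS_expansion_coef_top Hexp Hg0c Hg0n) => g1 Hc1 Hg1.
  have [Hg1c _] := Hs g1 (Hc g1 Hc1).
  have Hr1 : (rank g0 < rank g1)%N.
    by case: (Hg1) => Hs1 _; rewrite /rank -Hd0 -Hs1; apply: revlex_rank_lt.
  have := Hmax g1 (Hc g1 Hc1); rewrite Hc1 /= -Hd0.
  by case: (Hg1) => -> _; rewrite eqxx (ltn_trans Hr0 Hr1) => /(_ isT); rewrite leqNgt Hr1.
split=> //; rewrite -(QS_expansion_coef_top Hexp Ha Han) ?Mcoef ?eqxx // => g Hcg /Hzero.
by move/eqP: Hcg.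
Qed.

End Expansion.

Unset Implicit Arguments.
Local Open Scope ring_scope.

Theorem theorem5p3 (n : nat) (a : seq nat) :
  (1 <= n)%N -> is_comp a -> (size a <= n)%N ->
  (exists s c, QS_expansion (Mmon n a) s c) /\
  (forall s c, QS_expansion (Mmon n a) s c ->
     c a = 1 /\ (forall g, revlex_gt g a -> c g = 0)).
Proof.
move=> Hn Ha Han; split; last by move=> s c; apply: (Mmon_expansion_triangular (Ordinal Hn)).
exact: (Mmon_expandable (Ordinal Hn) (ltnSn _)).
Qed.
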